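(* Let $l,t$ be integers with $2\leq l\leq t$. If $s$ is sufficiently large (in terms of $l,t$), then for all integers $n\geq 2s+1$ and $x$ with $l\leq x\leq s$, $$ex(n,\{K_{l,t},M_{s+1}\},x)\leq (l-1)n+(t-1)\binom{s}{l}-\left\lceil\frac{s(l-1)}{2}\right\rceil.$$
   Context: All graphs are finite and simple. $K_{l,t}$ is the complete bipartite graph with parts of sizes $l,t$; $M_{s+1}$ is the matching of $s+1$ disjoint edges. For a graph $G$ with matching number at most $s$, say $X\subseteq V(G)$ is admissible if $|X|+\sum_{i=1}^m\lfloor |V(C_i)|/2\rfloor\leq s$, where $C_1,\dots,C_m$ are the components of $G-X$; let $x(G)$ be the maximum size of an admissible set. Let $\mathscr{G}_x$ be the set of graphs on $n$ vertices containing neither $K_{l,t}$ nor $M_{s+1}$ as a subgraph and with $x(G)=x$, and $ex(n,\{K_{l,t},M_{s+1}\},x)=\max_{G\in\mathscr{G}_x}e(G)$. *)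

(* A simple graph on n vertices is a symmetric irreflexive
   relation e : rel 'I_n. *)
From mathcomp Require Import all_boot.
Set Implicit Arguments. Unset Strict Implicit. Unset Printing Implicit Defensive.

Section Graphs.
Variable n : nat.
Variable e : rel 'I_n.

Definition num_edges : nat :=
  #|[set p : 'I_n * 'I_n | (p.1 < p.2) && e p.1 p.2]|.

Definition contains_Klt (l t : nat) : Prop :=
  exists A B : {set 'I_n},
    [/\ #|A| = l, #|B| = t, [disjoint A & B] &
        forall a b, a \in A -> b \in B -> e a b].

Definition is_matching (M : {set 'I_n * 'I_n}) : Prop :=
  (forall p, p \in M -> (p.1 < p.2) && e p.1 p.2) /\
  (forall p q, p \in M -> q \in M -> p != q ->
     [disjoint [set p.1; p.2] & [set q.1; q.2]]).

Definition contains_matching (k : nat) : Prop :=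
  exists M, is_matching M /\ #|M| = k.

Definition del_rel (X : {set 'I_n}) : rel 'I_n :=
  fun u v => [&& e u v, u \notin X & v \notin X].

Definition comp_of (X : {set 'I_n}) (v : 'I_n) : {set 'I_n} :=
  [set u | connect (del_rel X) v u].

Definition components (X : {set 'I_n}) : {set {set 'I_n}} :=
  [set comp_of X v | v in ~: X].

Definition admissible (s : nat) (X : {set 'I_n}) : bool :=
  #|X| + \sum_(C in components X) (#|C| %/ 2) <= s.

Definition xG (s : nat) : nat :=
  \max_(X : {set 'I_n} | admissible s X) #|X|.

End Graphs.

(* Let X be an admissible set of maximum size x.  Every degree d satisfies
   d <= (l-1) + C(d,l), and since G has no K_{l,t}, every l-subset of X has
   fewer than t common neighbours, so the sum over all vertices u of
   C(deg_X u, l) is at most (t-1) C(x,l).  Double counting then gives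
   2 e(G) + (l-1) x <= 2 (l-1) n + 2 (t-1) C(x,l) + W, where W counts the
   edges of G - X twice.  These edges live on the non-isolated vertices of
   G - X, of which there are at most 3 (s-x) by admissibility (a component
   with c >= 2 vertices has c <= 3 floor(c/2)), so W = O((s-x)^2); for l = 2
   the K_{2,t}-freeness of G - X sharpens this.  For s large the growth
   (t-1) (C(s,l) - C(x,l)) absorbs both W and (l-1)(s-x). *)

From mathcomp Require Import all_boot zify.
Set Implicit Arguments. Unset Strict Implicit. Unset Printing Implicit Defensive.

Lemma mul2_bin2 m : 2 * 'C(m, 2) = m * m.-1.
Proof. by rewrite -mul_bin_diag bin1. Qed.

Lemma mul_bin3 m : 6 * 'C(m, 3) = m * m.-1 * m.-2.
Proof. by rewrite mulnC bin_ffact !ffactnS ffactn0 muln1 mulnA. Qed.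

Lemma leq_bin_shift r m j : r <= m -> m <= j -> 'C(j - m + r, r) <= 'C(j, m).
Proof.
elim: m j => [|m IH] j rm mj.
  by rewrite (_ : r = 0) ?bin0 //; lia.
have [rm'|mr] := ltnP r m.+1; last first.
  by rewrite (_ : r = m.+1) ?subnK //; lia.
case: j mj => [//|j] mj; rewrite binS subSS.
exact: leq_trans (IH j rm' mj) (leq_addl _ _).
Qed.

Lemma leq_bin_deg l d : 0 < l -> d <= (l - 1) + 'C(d, l).
Proof.
move=> l0; have [dl|ld] := ltnP d l; first lia.
have := leq_bin_shift l0 ld; rewrite bin1; lia.
Qed.

Lemma leq_bin_increment r l x k : 0 < r -> r <= l -> l <= x ->
  'C(x - l + r + k, r) + 'C(x, l) <= 'C(x - l + r, r) + 'C(x + k, l).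
Proof.
move=> r0 rl lx; elim: k => [|k IH]; first by rewrite !addn0 addnC.
case: r r0 rl IH => // r _ rl IH; case: l rl lx IH => // l rl lx IH.
have := @leq_bin_shift r l (x + k) rl (ltac:(lia)).
have -> : x + k - l + r = x - l.+1 + r.+1 + k by lia.
set y := x - l.+1 + r.+1 in IH *.
rewrite !addnS !binS; lia.
Qed.

Lemma leq_mul_bin2 d D : (D - 1) * d <= (D - 1) * D + 2 * 'C(d, 2).
Proof.
rewrite mul2_bin2; have [dD|Dd] := leqP d D.
  by rewrite (leq_trans _ (leq_addr _ _)) // leq_mul2l dD orbT.
by rewrite (leq_trans _ (leq_addl _ _)) // mulnC leq_mul2l; case: d Dd => //= d; lia.
Qed.

Lemma bin3_increment l y k : 2 <= y -> 203 + 3 * l <= y + k ->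
  9 * (k * k) + l * k + 2 * 'C(y, 3) <= 2 * 'C(y + k, 3).
Proof.
move=> y2 hyk; have := mul_bin3 y; have := mul_bin3 (y + k).
suff : 54 * (k * k) + 6 * (l * k) + 2 * (y * y.-1 * y.-2) <=
       2 * ((y + k) * (y + k).-1 * (y + k).-2) by lia.
have [a Ea] : exists a, y = a.+2 by exists (y - 2); lia.
rewrite {}Ea {y2} !addSn /= in hyk *.
have : 54 * k + 6 * l <= 3 * (a * a) + 3 * (a * k) + k * k + 3 * a + 2 by nia.
nia.
Qed.

(* For l = 2 the bound W <= z^2 alone would not do: 2 (C(x+k,2) - C(x,2)) can be
   about k^2 while z^2 reaches 9 k^2. *)
Lemma bin2_increment T x k z W : 0 < T -> 2 <= x -> 208 <= x + k -> z <= 3 * k ->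
  39 * W <= 1560 * z + 2 * T * 'C(z, 2) ->
  W + k + 2 * T * 'C(x, 2) <= 2 * T * 'C(x + k, 2).
Proof.
rewrite -!mulnA !(mulnCA 2) !mul2_bin2 => T0 x2 hxk zk hW.
have zz : z * z.-1 <= 9 * (k * k).
  have : z * z.-1 <= z * z by rewrite leq_mul2l leq_pred orbT.
  have := leq_mul zk zk; lia.
have {zz}hW : 39 * W <= 4680 * k + 9 * (T * (k * k)).
  by have := leq_mul (leqnn T) zz; rewrite mulnCA; lia.
have hx : 4719 + 9 * k <= 39 * (2 * x + k - 1) by lia.
have {hx} : (4719 + 9 * k) * (T * k) <= 39 * (2 * x + k - 1) * (T * k).
  by rewrite leq_mul2r hx orbT.
have -> : (x + k) * (x + k).-1 = x * x.-1 + k * (2 * x + k - 1).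
  by case: x x2 {hW hxk} => // x _; rewrite addSn /=; nia.
have : k <= T * k by rewrite leq_pmull.
rewrite mulnDr; nia.
Qed.

Lemma bin_increment_ge3 l x k : 3 <= l -> l <= x -> 200 + 4 * l <= x + k ->
  9 * (k * k) + (l - 1) * k + 2 * 'C(x, l) <= 2 * 'C(x + k, l).
Proof.
move=> l3 lx hxk.
have := @leq_bin_increment 3 l x k isT l3 lx.
have := @bin3_increment l (x - l + 3) k (ltac:(lia)) (ltac:(lia)).
have : (l - 1) * k <= l * k by rewrite leq_mul2r leq_subr orbT.
lia.
Qed.

Lemma bin_gap_bound l t s x z W : 2 <= l -> l <= t -> 200 + 4 * l <= s ->
  l <= x -> x <= s -> z <= 3 * (s - x) -> W <= z * z ->
  (l = 2 -> 39 * W <= 1560 * z + 2 * (t - 1) * 'C(z, 2)) ->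
  W + (l - 1) * (s - x) + 2 * (t - 1) * 'C(x, l) <= 2 * (t - 1) * 'C(s, l).
Proof.
move=> l2 lt hs lx xs zk Wz hl2.
have [k Es] : exists k, s = x + k by exists (s - x); lia.
rewrite Es addKn in zk *; rewrite Es in hs.
have [El|l3] := eqVneq l 2.
  subst l; rewrite subn1 /= mul1n.
  by apply: bin2_increment (hl2 erefl); lia.
have {}l3 : 3 <= l by lia.
have [T ET] : exists T, t - 1 = T.+1 by exists (t - 2); lia.
rewrite ET -!mulnA !mulSn.
have : T * 'C(x, l) <= T * 'C(x + k, l) by rewrite leq_mul2l leq_bin2l ?orbT // leq_addr.
have := bin_increment_ge3 l3 lx hs; have := leq_mul zk zk.
lia.
Qed.

Lemma card_bigcup_le (T I : finType) (P : pred I) (F : I -> {set T}) :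
  #|\bigcup_(i | P i) F i| <= \sum_(i | P i) #|F i|.
Proof.
apply: (big_ind2 (fun (U : {set T}) m => #|U| <= m)) => [|U1 m1 U2 m2 h1 h2|//].
  by rewrite cards0.
by apply: leq_trans (leq_card_setU U1 U2) _; apply: leq_add.
Qed.

Section DegreeCounting.
Variable n : nat.
Variable e : rel 'I_n.
Hypothesis esym : symmetric e.
Hypothesis eirr : irreflexive e.
Implicit Types (X Y : {set 'I_n}) (u v : 'I_n).

Definition nbhd Y u := [set v in Y | e u v].
Definition deg_in Y u := #|nbhd Y u|.

Lemma deg_inE Y u : deg_in Y u = \sum_v ((v \in Y) && e u v).
Proof.
rewrite /deg_in -sum1_card [LHS]big_mkcond /=; apply: eq_bigr => v _.
by rewrite inE; case: (_ && _).
Qed.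

Lemma deg_inT_split X u : deg_in setT u = deg_in X u + deg_in (~: X) u.
Proof.
rewrite !deg_inE -big_split /=; apply: eq_bigr => v _.
by rewrite !inE; case: (v \in X); case: (e u v).
Qed.

Lemma sum_deg_in_sym (A B : {set 'I_n}) :
  \sum_(u in A) deg_in B u = \sum_(v in B) deg_in A v.
Proof.
have sumE (P Q : {set 'I_n}) (r : rel 'I_n) : \sum_(u in P) \sum_v ((v \in Q) && r u v) =
    \sum_u \sum_v [&& u \in P, v \in Q & r u v].
  rewrite big_mkcond; apply: eq_bigr => u _.
  by case: (u \in P); rewrite //= big1_eq.
under eq_bigr do rewrite deg_inE; under [RHS]eq_bigr do rewrite deg_inE.
rewrite !sumE exchange_big; do 2!apply: eq_bigr => ? _.
by rewrite esym andbCA.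
Qed.

Lemma handshake : 2 * num_edges e = \sum_u deg_in setT u.
Proof.
have -> : num_edges e = \sum_(u : 'I_n) \sum_(v : 'I_n) ((u < v) && e u v).
  rewrite /num_edges -sum1_card pair_bigA /= big_mkcond /=.
  by apply: eq_bigr => p _; rewrite inE; case: (_ && _).
have deg_split u : deg_in setT u =
    \sum_(v : 'I_n) ((u < v) && e u v) + \sum_(v : 'I_n) ((v < u) && e v u).
  rewrite deg_inE -big_split; apply: eq_bigr => v _; rewrite in_setT (esym v u).
  by case: (ltngtP u v) => [_|_|/val_inj ->] /=; rewrite ?eirr ?addn0.
under [RHS]eq_bigr do rewrite deg_split.
by rewrite big_split /= [X in _ + X]exchange_big addnn -mul2n.
Qed.

Lemma card_common_nbhd_lt l t Y (A : {set 'I_n}) : ~ contains_Klt e l t ->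
  #|A| = l -> #|[set u | A \subset nbhd Y u]| < t.
Proof.
move=> noK Al; rewrite ltnNge; apply/negP => tS.
have : 0 < 'C(#|[set u | A \subset nbhd Y u]|, t) by rewrite bin_gt0.
rewrite -cards_draws => /card_gt0P [B]; rewrite inE => /andP [/subsetP BS /eqP Bt].
have eAB a b : a \in A -> b \in B -> e a b.
  move=> aA /BS; rewrite inE => /subsetP /(_ a aA).
  by rewrite inE esym => /andP [].
apply: noK; exists A, B; split => //.
rewrite disjoint_subset; apply/subsetP => a aA; rewrite inE.
by apply/negP => /(eAB a a aA); rewrite eirr.
Qed.

Lemma sum_bin_deg_in_le l t Y : ~ contains_Klt e l t -> 0 < t ->
  \sum_u 'C(deg_in Y u, l) <= (t - 1) * 'C(#|Y|, l).
Proof.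
move=> noK t0; rewrite -cards_draws -sum1_card big_distrr /=.
have drawsE u : 'C(deg_in Y u, l) =
    \sum_(A : {set 'I_n}) ((A \subset nbhd Y u) && (#|A| == l)).
  by rewrite -cards_draws -sum1_card big_mkcond; apply: eq_bigr => A _; rewrite inE.
under eq_bigr do rewrite drawsE; rewrite exchange_big [leqRHS]big_mkcond /=.
apply: leq_sum => A _; rewrite inE muln1.
have [Al|] := eqVneq #|A| l; last by rewrite big1 // => u _; rewrite andbF.
have [AY|nAY] := boolP (A \subset Y); last first.
  rewrite big1 // => u _.
  have -> // : A \subset nbhd Y u = false.
  apply: contraNF nAY => /subset_trans -> //.
  by apply/subsetP => v; rewrite inE => /andP [].
have -> : \sum_u ((A \subset nbhd Y u) && true) = #|[set u | A \subset nbhd Y u]|.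
  by rewrite -sum1_card [RHS]big_mkcond; apply: eq_bigr => u _; rewrite inE andbT.
by have := card_common_nbhd_lt Y noK Al; rewrite /=; lia.
Qed.

Lemma sum_deg_in_le_sq Y : \sum_(u in Y) deg_in Y u <= #|Y| * #|Y|.
Proof.
rewrite -sum_nat_const leq_sum // => u _; apply: subset_leq_card.
by apply/subsetP => v; rewrite inE => /andP [].
Qed.

Lemma sum_deg_in_K2_free t Y : ~ contains_Klt e 2 t -> 0 < t ->
  39 * \sum_(u in Y) deg_in Y u <= 1560 * #|Y| + 2 * (t - 1) * 'C(#|Y|, 2).
Proof.
move=> noK t0; have := sum_bin_deg_in_le Y noK t0.
have sumY : \sum_(u in Y) 'C(deg_in Y u, 2) <= \sum_u 'C(deg_in Y u, 2).
  by rewrite [leqRHS](bigID [in Y]) leq_addr.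
have : 39 * \sum_(u in Y) deg_in Y u <= 1560 * #|Y| + 2 * \sum_(u in Y) 'C(deg_in Y u, 2).
  rewrite [1560 * _]mulnC -sum_nat_const !big_distrr -big_split leq_sum // => u _.
  exact: (leq_mul_bin2 (deg_in Y u) 40).
lia.
Qed.

Definition nonisolated X := [set u | [exists v, del_rel e X u v]].

Lemma card_nonisolated_le X :
  #|nonisolated X| <= 3 * \sum_(C in components e X) (#|C| %/ 2).
Proof.
pose big := [pred C : {set 'I_n} | (C \in components e X) && (1 < #|C|)].
have cover : nonisolated X \subset \bigcup_(C | big C) C.
  apply/subsetP => u; rewrite inE => /existsP [v /and3P [euv uX vX]].
  apply/bigcupP; exists (comp_of e X u); last by rewrite inE connect0.
  apply/andP; split; first by apply/imsetP; exists u; rewrite ?inE.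
  have uv : [set u; v] \subset comp_of e X u.
    apply/subsetP => w; rewrite !inE => /orP [] /eqP ->; first exact: connect0.
    by apply: connect1; rewrite /del_rel euv uX vX.
  apply: leq_trans (subset_leq_card uv); rewrite cards2.
  by case: eqVneq euv => // ->; rewrite eirr.
apply: leq_trans (subset_leq_card cover) _; apply: leq_trans (card_bigcup_le _ _) _.
rewrite big_distrr [leqRHS](bigID (fun C : {set 'I_n} => 1 < #|C|)) /=.
apply: leq_trans (leq_addr _ _); apply: leq_sum => C /andP [_].
by move: #|C| => c; lia.
Qed.

Lemma sum_deg_in_compl_le X : \sum_(u in ~: X) deg_in (~: X) u <=
  \sum_(u in nonisolated X) deg_in (nonisolated X) u.
Proof.
rewrite big_mkcond [leqRHS]big_mkcond leq_sum // => u _; rewrite inE.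
have [uX|//] := boolP (u \notin X).
have [uZ|uZ] := boolP (u \in nonisolated X).
  apply: subset_leq_card; apply/subsetP => v; rewrite !inE => /andP [vX euv].
  by rewrite euv andbT; apply/existsP; exists u; rewrite /del_rel esym euv vX.
rewrite leqn0 cards_eq0; apply/eqP/setP => v; rewrite !inE.
apply/negP => /andP [vX euv]; move: uZ; rewrite inE => /existsPn /(_ v).
by rewrite /del_rel euv uX vX.
Qed.

Lemma num_edges_le l t X : 0 < l -> 0 < t -> ~ contains_Klt e l t ->
  2 * num_edges e + (l - 1) * #|X| <=
  2 * ((l - 1) * n) + 2 * ((t - 1) * 'C(#|X|, l)) + \sum_(u in ~: X) deg_in (~: X) u.
Proof.
move=> l0 t0 noK.
have splitX (F : 'I_n -> nat) : \sum_u F u = \sum_(u in X) F u + \sum_(u in ~: X) F u.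
  by rewrite (bigID [in X]); congr (_ + _); apply: eq_bigl => u; rewrite inE.
have degX (P : {set 'I_n}) :
    \sum_(u in P) deg_in X u <= #|P| * (l - 1) + \sum_(u in P) 'C(deg_in X u, l).
  by rewrite -sum_nat_const -big_split leq_sum // => u _; apply: leq_bin_deg.
have := sum_bin_deg_in_le X noK t0; rewrite splitX.
have := degX X; have := degX (~: X).
have : #|X| * (l - 1) + #|~: X| * (l - 1) = n * (l - 1).
  by rewrite -mulnDl cardsC card_ord.
rewrite handshake (eq_bigr _ (fun u _ => deg_inT_split X u)) big_split /= !splitX.
rewrite [\sum_(u in X) deg_in (~: X) u]sum_deg_in_sym.
move: (\sum_(u in X) deg_in X u) (\sum_(u in ~: X) deg_in X u).
move: (\sum_(u in ~: X) deg_in (~: X) u) (\sum_(u in X) 'C(deg_in X u, l)).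
by move: (\sum_(u in ~: X) 'C(deg_in X u, l)) => Cb Ca c a b; lia.
Qed.

Lemma num_edges_admissible_le l t s X : 2 <= l -> l <= t -> 200 + 4 * l <= s ->
  ~ contains_Klt e l t -> admissible e s X -> l <= #|X| ->
  2 * num_edges e + s * (l - 1) <= 2 * ((l - 1) * n + (t - 1) * 'C(s, l)).
Proof.
move=> l2 lt hs noK adm lX; have t0 : 0 < t by lia.
have := card_nonisolated_le X; move: adm; rewrite /admissible.
move: (\sum_(C in components e X) (#|C| %/ 2)) => m adm Zm.
have := num_edges_le X (ltnW l2) t0 noK.
have := sum_deg_in_compl_le X.
have Xs : #|X| <= s by lia.
have Zk : #|nonisolated X| <= 3 * (s - #|X|) by lia.
have K2 : l = 2 -> 39 * \sum_(u in nonisolated X) deg_in (nonisolated X) u <=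
    1560 * #|nonisolated X| + 2 * (t - 1) * 'C(#|nonisolated X|, 2).
  by move=> El; apply: sum_deg_in_K2_free => //; rewrite -El.
have := bin_gap_bound l2 lt hs lX Xs Zk (sum_deg_in_le_sq _) K2.
move: (\sum_(u in nonisolated X) deg_in (nonisolated X) u) => W.
move: (\sum_(u in ~: X) deg_in (~: X) u) => c.
have : (l - 1) * #|X| + (l - 1) * (s - #|X|) = s * (l - 1).
  by rewrite -mulnDr subnKC // mulnC.
rewrite !mulnA; lia.
Qed.

End DegreeCounting.

Lemma xG_attained n (e : rel 'I_n) s : 0 < xG e s ->
  exists2 X, admissible e s X & #|X| = xG e s.
Proof.
rewrite /xG; have [X0 adm0|none] := pickP (admissible e s); last first.
  by rewrite big_pred0.
have ne : 0 < #|admissible e s| by apply/card_gt0P; exists X0.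
by have [X adm ->] := eq_bigmax_cond (fun X : {set 'I_n} => #|X|) ne; exists X.
Qed.

Theorem corollary3p5 (l t : nat) (Hl : 2 <= l) (Hlt : l <= t) :
  exists s0 : nat, forall s : nat, s0 <= s ->
  forall n : nat, 2 * s + 1 <= n ->
  forall x : nat, l <= x -> x <= s ->
  forall e : rel 'I_n, symmetric e -> irreflexive e ->
    ~ contains_Klt e l t ->
    ~ contains_matching e s.+1 ->
    xG e s = x ->
    num_edges e + (s * (l - 1)).+1 %/ 2 <= (l - 1) * n + (t - 1) * 'C(s, l).
Proof.
exists (200 + 4 * l) => s hs n _ x lx _ e esym eirr noK _ xGx.
have [X adm cardX] : exists2 X, admissible e s X & #|X| = x.
  by rewrite -xGx; apply: xG_attained; lia.
have := num_edges_admissible_le esym eirr Hl Hlt hs noK adm.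
rewrite cardX => /(_ lx); lia.
Qed.
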